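(* Let $\mathscr{H}$ be a complex Hilbert space, $N(\cdot)$ a norm on $\mathbb{B}(\mathscr{H})$, and $B,C\in\mathbb{B}(\mathscr{H})$. Then (a) $w_{(N,e)}(B,C)\geq\max\{w_N(B),w_N(C)\}$; (b) $w_{(N,e)}(B,C)\leq\sqrt{w_N^2(B)+w_N^2(C)}$.
   Context: For $T\in\mathbb{B}(\mathscr{H})$: $\Re(T)=\frac12(T+T^* )$ and $w_N(T)=\sup_{\theta\in\mathbb{R}}N(\Re(e^{i\theta}T))$. For $B,C\in\mathbb{B}(\mathscr{H})$, $w_{(N,e)}(B,C)=\sup_{\lambda_1,\lambda_2\in\mathbb{C},\ |\lambda_1|^2+|\lambda_2|^2\leq 1}\sup_{\theta\in\mathbb{R}} N(\Re(e^{i\theta}(\lambda_1B+\lambda_2C)))$. *)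

From HB Require Import structures.
From mathcomp Require Import all_boot all_order all_algebra.
From mathcomp Require Import all_classical all_reals.
From mathcomp Require Import ereal trigo.
From mathcomp Require Import complex.
From Stdlib Require Import ClassicalEpsilon.

Set Implicit Arguments. Unset Strict Implicit. Unset Printing Implicit Defensive.
Import Order.TTheory GRing.Theory Num.Theory.
Local Open Scope ring_scope.

Section Hilbert.
Variable R : realType.
Local Notation C := (R[i]).
Variable V : lmodType C.
Variable ip : V -> V -> C.

Definition is_inner_product : Prop :=
  [/\ forall (a : C) (x y z : V), ip (a *: x + y) z = a * ip x z + ip y z,
      forall x y : V, ip y x = conjc (ip x y),
      forall x : V, 0 <= ip x x
    & forall x : V, ip x x = 0 -> x = 0].

Definition hnorm (x : V) : R := Num.sqrt (complex.Re (ip x x)).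

Definition hcomplete : Prop :=
  forall u : nat -> V,
    (forall e : R, 0 < e -> exists M : nat, forall m n : nat,
        (M <= m)%N -> (M <= n)%N -> hnorm (u m - u n) < e) ->
    exists l : V, forall e : R, 0 < e -> exists M : nat, forall n : nat,
        (M <= n)%N -> hnorm (u n - l) < e.

Definition is_hilbert : Prop := is_inner_product /\ hcomplete.

Definition bounded_op (T : V -> V) : Prop :=
  (forall (a : C) (x y : V), T (a *: x + y) = a *: T x + T y) /\
  exists K : R, forall x : V, hnorm (T x) <= K * hnorm x.

(* the adjoint T^* : T^* y is the (unique, by Riesz) z with <T x, y> = <x, z> for all x *)
Definition adj (T : V -> V) : V -> V := fun y =>
  match excluded_middle_informative
          (exists z : V, forall x : V, ip (T x) y = ip x z) with
  | left h => proj1_sig (constructive_indefinite_description _ h)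
  | right _ => 0
  end.

Definition ReOp (T : V -> V) : V -> V := fun x => (2%:R)^-1 *: (T x + adj T x).

Definition opadd (T U : V -> V) : V -> V := fun x => T x + U x.
Definition opscale (a : C) (T : V -> V) : V -> V := fun x => a *: T x.

Definition is_op_norm (N : (V -> V) -> R) : Prop :=
  [/\ forall T, bounded_op T -> 0 <= N T,
      forall T, bounded_op T -> N T = 0 -> T = (fun _ => 0),
      forall (a : C) T, bounded_op T -> N (opscale a T) = ComplexField.Normc.normc a * N T
    & forall T U, bounded_op T -> bounded_op U -> N (opadd T U) <= N T + N U].

Definition expi (t : R) : C := Complex (cos t) (sin t).

Definition wN (N : (V -> V) -> R) (T : V -> V) : \bar R :=
  ereal_sup [set (N (ReOp (opscale (expi t) T)))%:E | t in [set: R]].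

Definition wNe (N : (V -> V) -> R) (B Cop : V -> V) : \bar R :=
  ereal_sup [set x | exists (l1 l2 : C) (t : R),
     ComplexField.Normc.normc l1 ^+ 2 + ComplexField.Normc.normc l2 ^+ 2 <= 1 /\
     x = (N (ReOp (opscale (expi t) (opadd (opscale l1 B) (opscale l2 Cop)))))%:E].

End Hilbert.

(* square root on extended reals (sqrt(+oo) = +oo; -oo does not occur here) *)
Definition esqrt (R : realType) (x : \bar R) : \bar R :=
  match x with
  | EFin r => (Num.sqrt r)%:E
  | +oo%E => +oo%E
  | -oo%E => 0%E
  end.

From HB Require Import structures.
From mathcomp Require Import all_boot all_order all_algebra.
From mathcomp Require Import all_classical all_reals.
From mathcomp Require Import ereal trigo.
From mathcomp Require Import complex.
From mathcomp Require Import ring lra.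
From Stdlib Require Import ClassicalEpsilon.
Import Order.TTheory GRing.Theory Num.Theory ComplexField.Normc.
Local Open Scope ring_scope.
Local Open Scope complex_scope.

(* (a): take (l1, l2) = (1, 0) or (0, 1) in the supremum defining w_(N,e).
   (b): write e^{it} l_k = |l_k| e^{i t_k}. Since Re(T) = (T + T^* )/2 is real-linear in T,
   Re(e^{it}(l1 B + l2 C)) = |l1| Re(e^{i t1} B) + |l2| Re(e^{i t2} C), whose N-norm is at most
   |l1| w_N(B) + |l2| w_N(C) <= sqrt(w_N(B)^2 + w_N(C)^2) by Cauchy-Schwarz in R^2.
   Real-linearity of Re, and boundedness of Re(T) (N is only a norm on bounded operators),
   need the adjoint of a bounded operator to exist. It comes from the Riesz representation
   theorem: by completeness and the parallelogram law the hyperplane {f = 1} has an element of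
   minimal norm, which is orthogonal to ker f and hence represents f up to scaling. *)

Set Implicit Arguments. Unset Strict Implicit. Unset Printing Implicit Defensive.

Lemma inv_succ_lt (R : archiRealFieldType) (e : R) :
  0 < e -> exists M, forall n, (M <= n)%N -> n.+1%:R^-1 < e.
Proof.
move=> e0; exists (Num.Def.archi_bound e^-1) => n le_Mn.
rewrite invf_plt ?posrE ?ltr0Sn //.
have e_inv_ge0 : 0 <= e^-1 by rewrite invr_ge0 ltW.
by apply: lt_le_trans (archi_boundP e_inv_ge0) _; rewrite ler_nat leqW.
Qed.

Lemma ler_unit_dot_sqrt (R : rcfType) (a1 a2 b1 b2 : R) :
  a1 ^+ 2 + a2 ^+ 2 <= 1 -> a1 * b1 + a2 * b2 <= Num.sqrt (b1 * b1 + b2 * b2).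
Proof.
move=> a_unit; apply: le_trans (ler_norm _) _.
rewrite -sqrtr_sqr ler_sqrt; last by nra.
(* Lagrange's identity: (a.b)^2 + (a1 b2 - a2 b1)^2 = |a|^2 |b|^2 *)
have := sqr_ge0 (a1 * b2 - a2 * b1).
have : 0 <= (1 - (a1 ^+ 2 + a2 ^+ 2)) * (b1 * b1 + b2 * b2).
  by apply: mulr_ge0; [lra | nra].
nra.
Qed.

Lemma lee_unit_dot_esqrt (R : realType) (a1 a2 x1 x2 : R) (b1 b2 : \bar R) :
  0 <= a1 -> 0 <= a2 -> a1 ^+ 2 + a2 ^+ 2 <= 1 ->
  (x1%:E <= b1)%E -> (x2%:E <= b2)%E ->
  ((a1 * x1 + a2 * x2)%:E <= esqrt (b1 * b1 + b2 * b2))%E.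
Proof.
move=> a10 a20 a_unit.
case: b1 => [b1| |] //; case: b2 => [b2| |] //=; rewrite ?leey // !lee_fin => le1 le2.
apply: le_trans (ler_unit_dot_sqrt b1 b2 a_unit).
by apply: lerD; apply: ler_wpM2l.
Qed.

Lemma normcE (R : rcfType) (z : R[i]) :
  normc z = Num.sqrt (complex.Re z ^+ 2 + complex.Im z ^+ 2).
Proof. by case: z. Qed.

Lemma normc_ge0 (R : rcfType) (z : R[i]) : 0 <= normc z.
Proof. by rewrite normcE sqrtr_ge0. Qed.

Lemma normc_real (R : rcfType) (r : R) : normc r%:C = `|r|.
Proof. by rewrite normcE /= expr0n /= addr0 sqrtr_sqr. Qed.

Lemma normc_expi (R : realType) (t : R) : normc (expi t) = 1.
Proof. by rewrite normcE /= cos2Dsin2 sqrtr1. Qed.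

Lemma expi_onto (R : realType) (u : R[i]) : normc u = 1 -> exists t, expi t = u.
Proof.
case: u => a b; rewrite normcE /= => u1.
have ab1 : a ^+ 2 + b ^+ 2 = 1.
  by rewrite -[LHS]sqr_sqrtr ?addr_ge0 ?sqr_ge0 // u1 expr1n.
have a_bd : -1 <= a <= 1 by apply/andP; split; nra.
have [_ cos_acos] := acos_def a_bd.
have sin_acos_b : sin (acos a) = `|b|.
  by rewrite sin_acos // (_ : 1 - a ^+ 2 = b ^+ 2) ?sqrtr_sqr //; lra.
have [b0|b0] := leP 0 b.
- by exists (acos a); rewrite /expi cos_acos sin_acos_b ger0_norm.
- by exists (- acos a); rewrite /expi cosN sinN cos_acos sin_acos_b ltr0_norm ?opprK.
Qed.

Lemma polar_decomposition (R : rcfType) (z : R[i]) :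
  exists2 u, z = (normc z)%:C * u & normc u = 1.
Proof.
have [->|z0] := eqVneq z 0; first by exists 1; rewrite ?normc0 ?normc1 ?mulr1.
have nz0 : normc z != 0 by apply: contra z0 => /eqP/eq0_normc ->.
have nzC0 : (normc z)%:C != 0 by rewrite -[0]/(0%:C) (inj_eq (@complexI _)).
exists (z / (normc z)%:C); first by rewrite mulrC divfK.
by rewrite normcM normcV normc_real ger0_norm ?normc_ge0 // mulfV.
Qed.

Lemma expi_mul_polar (R : realType) (t : R) (l : R[i]) :
  exists s, expi t * l = (normc l)%:C * expi s.
Proof.
have [u -> u1] := polar_decomposition (expi t * l).
have [s <-] := expi_onto u1.
by exists s; rewrite normcM normc_expi mul1r.
Qed.

Section InnerProduct.
Variables (R : realType) (V : lmodType R[i]) (ip : V -> V -> R[i]).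
Hypothesis ipP : is_inner_product ip.
Local Notation hnorm := (hnorm ip).

Definition sqnorm (x : V) : R := complex.Re (ip x x).

Lemma ipDl x y z : ip (x + y) z = ip x z + ip y z.
Proof. by case: ipP => ipDZ _ _ _; have := ipDZ 1 x y z; rewrite scale1r mul1r. Qed.

Lemma ip0l z : ip 0 z = 0.
Proof. by apply: (addrI (ip 0 z)); rewrite -ipDl !addr0. Qed.

Lemma ipZl a x z : ip (a *: x) z = a * ip x z.
Proof. by case: ipP => ipDZ _ _ _; rewrite -[a *: x]addr0 ipDZ ip0l addr0. Qed.

Lemma ipC x y : ip y x = conjc (ip x y).
Proof. by case: ipP. Qed.

Lemma ipDr x y z : ip z (x + y) = ip z x + ip z y.
Proof. by rewrite ipC ipDl rmorphD /= -!ipC. Qed.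

Lemma ipZr a x z : ip z (a *: x) = conjc a * ip z x.
Proof. by rewrite ipC ipZl rmorphM /= -ipC. Qed.

Lemma ip0r z : ip z 0 = 0.
Proof. by rewrite ipC ip0l rmorph0. Qed.

Lemma ipBr x y z : ip z (x - y) = ip z x - ip z y.
Proof. by rewrite ipDr -scaleN1r ipZr rmorphN1 mulN1r. Qed.

Lemma ipxx x : ip x x = (sqnorm x)%:C.
Proof.
case: ipP => _ _ ip_ge0 _; move: (ip_ge0 x); rewrite lecE /sqnorm.
by case: (ip x x) => a b /= /andP[/eqP ->].
Qed.

Lemma sqnorm_ge0 x : 0 <= sqnorm x.
Proof. by case: ipP => _ _ ip_ge0 _; move: (ip_ge0 x); rewrite lecE => /andP[]. Qed.

Lemma sqnorm_eq0 x : sqnorm x = 0 -> x = 0.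
Proof. by case: ipP => _ _ _ ip_eq0 x0; apply: ip_eq0; rewrite ipxx x0. Qed.

Lemma sqnorm0 : sqnorm 0 = 0.
Proof. by rewrite /sqnorm ip0l. Qed.

Lemma sqnormDZ a b s : sqnorm (a + s *: b) = sqnorm a
  + 2 * (complex.Re s * complex.Re (ip a b) + complex.Im s * complex.Im (ip a b))
  + (complex.Re s ^+ 2 + complex.Im s ^+ 2) * sqnorm b.
Proof.
rewrite {1}/sqnorm ipDl !ipDr !ipZl !ipZr (ipC a b) (ipxx a) (ipxx b).
by case: (ip a b) => p1 p2; case: s => s1 s2 /=; ring.
Qed.

Lemma sqnormZ s b : sqnorm (s *: b) = (complex.Re s ^+ 2 + complex.Im s ^+ 2) * sqnorm b.
Proof. by have := sqnormDZ 0 b s; rewrite add0r sqnorm0 ip0l /= => ->; ring. Qed.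

Lemma sqnormD a b : sqnorm (a + b) = sqnorm a + 2 * complex.Re (ip a b) + sqnorm b.
Proof. by have := sqnormDZ a b 1; rewrite scale1r /= => ->; ring. Qed.

Lemma sqnormB a b : sqnorm (a - b) = sqnorm a - 2 * complex.Re (ip a b) + sqnorm b.
Proof. by have := sqnormDZ a b (-1); rewrite scaleN1r /= => ->; ring. Qed.

Lemma parallelogram a b : sqnorm (a - b) + sqnorm (a + b) = 2 * sqnorm a + 2 * sqnorm b.
Proof. by rewrite sqnormB sqnormD; ring. Qed.

Lemma cauchy_schwarz a b :
  complex.Re (ip a b) ^+ 2 + complex.Im (ip a b) ^+ 2 <= sqnorm a * sqnorm b.
Proof.
have [b0|b_ne0] := eqVneq (sqnorm b) 0.
  by rewrite (sqnorm_eq0 b0) ip0r sqnorm0 mulr0 /= expr0n /= addr0.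
have b_gt0 : 0 < sqnorm b by rewrite lt_def b_ne0 sqnorm_ge0.
set p1 := complex.Re _; set p2 := complex.Im _.
(* expand |a - (<a,b> / |b|^2) b|^2 >= 0 *)
have := sqnorm_ge0 (a + Complex (- p1 / sqnorm b) (- p2 / sqnorm b) *: b).
rewrite sqnormDZ /= -/p1 -/p2.
have -> : sqnorm a + 2 * (- p1 / sqnorm b * p1 + - p2 / sqnorm b * p2)
    + ((- p1 / sqnorm b) ^+ 2 + (- p2 / sqnorm b) ^+ 2) * sqnorm b
  = sqnorm a - (p1 ^+ 2 + p2 ^+ 2) / sqnorm b by field.
by rewrite subr_ge0 ler_pdivrMr // mulrC.
Qed.

Lemma hnormE x : hnorm x = Num.sqrt (sqnorm x).
Proof. by []. Qed.

Lemma hnorm_ge0 x : 0 <= hnorm x.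
Proof. exact: sqrtr_ge0. Qed.

Lemma hnorm_sqr x : hnorm x ^+ 2 = sqnorm x.
Proof. by rewrite hnormE sqr_sqrtr ?sqnorm_ge0. Qed.

Lemma normc_ip_le a b : normc (ip a b) <= hnorm a * hnorm b.
Proof.
rewrite normcE !hnormE -sqrtrM ?sqnorm_ge0 // ler_sqrt ?mulr_ge0 ?sqnorm_ge0 //.
exact: cauchy_schwarz.
Qed.

Lemma Re_ip_le a b : complex.Re (ip a b) <= hnorm a * hnorm b.
Proof.
apply: le_trans (normc_ip_le a b); rewrite normcE.
apply: le_trans (ler_norm _) _; rewrite -sqrtr_sqr ler_sqrt ?addr_ge0 ?sqr_ge0 //.
by rewrite lerDl sqr_ge0.
Qed.

Lemma hnormD a b : hnorm (a + b) <= hnorm a + hnorm b.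
Proof.
rewrite -(ger0_norm (addr_ge0 (hnorm_ge0 a) (hnorm_ge0 b))) -sqrtr_sqr hnormE.
rewrite ler_sqrt ?sqr_ge0 // sqrrD !hnorm_sqr sqnormD.
have := Re_ip_le a b; lra.
Qed.

Lemma hnormZ s b : hnorm (s *: b) = normc s * hnorm b.
Proof. by rewrite !hnormE sqnormZ sqrtrM ?addr_ge0 ?sqr_ge0 // normcE. Qed.

Lemma hnormN x : hnorm (- x) = hnorm x.
Proof. by rewrite -scaleN1r hnormZ normcN normc1 mul1r. Qed.

Definition hcvg (u : nat -> V) (l : V) := forall e, 0 < e ->
  exists M, forall n, (M <= n)%N -> hnorm (u n - l) < e.

Lemma hcvg_sqnorm_le u l d : 0 <= d -> hcvg u l ->
  (forall n, sqnorm (u n) < d + n.+1%:R^-1) -> sqnorm l <= d.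
Proof.
move=> d0 u_l u_lt.
suff : hnorm l <= Num.sqrt d by rewrite hnormE ler_sqrt.
apply/ler_addgt0Pr => e e0.
have e2 : 0 < e / 2 by rewrite divr_gt0.
have [M1 hM1] := u_l _ e2.
have [M2 hM2] := inv_succ_lt (exprn_gt0 2 e2).
have [n [near_l small]] : exists n, hnorm (u n - l) < e / 2 /\ n.+1%:R^-1 < (e / 2) ^+ 2.
  by exists (maxn M1 M2); rewrite hM1 ?hM2 ?leq_maxl ?leq_maxr.
have le_un : hnorm (u n) <= Num.sqrt d + e / 2.
  rewrite -(ger0_norm (addr_ge0 (sqrtr_ge0 d) (ltW e2))) -sqrtr_sqr hnormE.
  rewrite ler_sqrt ?sqr_ge0 // sqrrD sqr_sqrtr // mulr2n.
  have : 0 <= Num.sqrt d * (e / 2) by rewrite mulr_ge0 ?sqrtr_ge0 ?ltW.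
  move: small (u_lt n); move: (n.+1%:R^-1 : R) => i small lt_i sqrt_ge0.
  lra.
have := hnormD (u n) (- (u n - l)); rewrite hnormN opprB addrC subrK.
lra.
Qed.

End InnerProduct.

Section Riesz.
Variables (R : realType) (V : lmodType R[i]) (ip : V -> V -> R[i]).
Hypotheses (ipP : is_inner_product ip) (ip_complete : hcomplete ip).
Variable f : V -> R[i].
Hypothesis f_linear : forall a x y, f (a *: x + y) = a * f x + f y.

Lemma flinD x y : f (x + y) = f x + f y.
Proof. by have := f_linear 1 x y; rewrite scale1r mul1r. Qed.

Lemma flin0 : f 0 = 0.
Proof. by apply: (addrI (f 0)); rewrite -flinD !addr0. Qed.

Lemma flinZ a x : f (a *: x) = a * f x.
Proof. by rewrite -[a *: x]addr0 f_linear flin0 addr0. Qed.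

Lemma flinB x y : f (x - y) = f x - f y.
Proof. by rewrite flinD -scaleN1r flinZ mulN1r. Qed.

Lemma level_min_orthogonal l k : f l = 1 ->
  (forall x, f x = 1 -> sqnorm ip l <= sqnorm ip x) -> f k = 0 -> ip l k = 0.
Proof.
move=> fl l_min fk.
have k_ge0 := sqnorm_ge0 ipP k.
pose t := (sqnorm ip k + 1)^-1.
have t_gt0 : 0 < t by rewrite invr_gt0; lra.
have tk_lt1 : t * sqnorm ip k < 1 by rewrite ltr_pdivrMl; lra.
(* moving l along k by -t <l,k> keeps f = 1 and changes |l|^2 by t |<l,k>|^2 (t |k|^2 - 2) *)
have f_moved : f (l + Complex (- t * complex.Re (ip l k)) (- t * complex.Im (ip l k)) *: k) = 1.
  by rewrite flinD flinZ fk mulr0 addr0.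
have := l_min _ f_moved; rewrite (sqnormDZ ipP) /=.
case: (ip l k) => p1 p2 /= moved_ge.
have P_ge0 : 0 <= p1 ^+ 2 + p2 ^+ 2 by rewrite addr_ge0 ?sqr_ge0.
have tP_le0 : t * (p1 ^+ 2 + p2 ^+ 2) <= 0.
  have : 0 <= t * (p1 ^+ 2 + p2 ^+ 2) * (1 - t * sqnorm ip k).
    by apply: mulr_ge0; [exact: mulr_ge0 (ltW t_gt0) P_ge0 | lra].
  nra.
have /eqP : p1 ^+ 2 + p2 ^+ 2 = 0.
  by apply/eqP; rewrite eq_le P_ge0 andbT -(pmulr_rle0 _ t_gt0).
by rewrite paddr_eq0 ?sqr_ge0 // !sqrf_eq0 => /andP[/eqP -> /eqP ->].
Qed.

Lemma level_min_riesz l : f l = 1 ->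
  (forall x, f x = 1 -> sqnorm ip l <= sqnorm ip x) -> exists z, forall x, f x = ip x z.
Proof.
move=> fl l_min.
have l_ne0 : sqnorm ip l != 0.
  apply/eqP => /(sqnorm_eq0 ipP) l0; move: fl.
  by rewrite l0 flin0 => /eqP; rewrite eq_sym oner_eq0.
exists ((sqnorm ip l)^-1%:C *: l) => x.
have fk : f (x - f x *: l) = 0 by rewrite flinB flinZ fl mulr1 subrr.
have := level_min_orthogonal fl l_min fk.
rewrite (ipBr ipP) (ipZr ipP) (ipxx ipP l) => /eqP; rewrite subr_eq0 => /eqP ip_lx.
rewrite (ipZr ipP) (ipC ipP l x) ip_lx.
case: (f x) => a b; apply/eqP; rewrite eq_complex /=.
by apply/andP; split; apply/eqP; field.
Qed.

Lemma level_sqnorm_sub d a b : (forall x, f x = 1 -> d <= sqnorm ip x) ->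
  f a = 1 -> f b = 1 -> sqnorm ip (a - b) <= 2 * sqnorm ip a + 2 * sqnorm ip b - 4 * d.
Proof.
move=> d_lb fa fb.
have f_mid : f ((2^-1)%:C *: (a + b)) = 1.
  rewrite flinZ flinD fa fb; apply/eqP; rewrite eq_complex /=.
  by apply/andP; split; apply/eqP; field.
have := d_lb _ f_mid; rewrite (sqnormZ ipP) /=.
have := parallelogram ipP a b; lra.
Qed.

Lemma minimizing_hcvg d xs : (forall x, f x = 1 -> d <= sqnorm ip x) ->
  (forall n, f (xs n) = 1) -> (forall n, sqnorm ip (xs n) < d + n.+1%:R^-1) ->
  exists l, hcvg ip xs l.
Proof.
move=> d_lb f_xs xs_lt; apply: ip_complete => e e0.
have e2_gt0 : 0 < e ^+ 2 / 4 by rewrite divr_gt0 ?exprn_gt0.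
have [M hM] := inv_succ_lt e2_gt0.
exists M => m n le_Mm le_Mn.
rewrite hnormE -(ger0_norm (ltW e0)) -sqrtr_sqr ltr_sqrt ?exprn_gt0 //.
have := level_sqnorm_sub d_lb (f_xs m) (f_xs n).
move: (hM m le_Mm) (hM n le_Mn) (xs_lt m) (xs_lt n).
by move: (m.+1%:R^-1 : R) (n.+1%:R^-1 : R) => im in_; lra.
Qed.

Variable K : R.
Hypothesis f_bounded : forall x, normc (f x) <= K * hnorm ip x.

Lemma hcvg_level xs l : (forall n, f (xs n) = 1) -> hcvg ip xs l -> f l = 1.
Proof.
move=> f_xs xs_l.
have K1 : 0 < `|K| + 1 by have := normr_ge0 K; lra.
apply/eqP; rewrite -subr_eq0; apply/eqP/eq0_normc/eqP.
rewrite eq_le normc_ge0 andbT; apply/ler_addgt0Pr => e e0; rewrite add0r.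
have [M hM] := xs_l _ (divr_gt0 e0 K1).
rewrite -normcN opprB -(f_xs M) -flinB.
apply: le_trans (f_bounded _) _.
have := hM M (leqnn M); rewrite ltr_pdivlMr //.
have := hnorm_ge0 ip (xs M - l); have := ler_norm K; nra.
Qed.

Lemma exists_level_min : (exists w, f w != 0) ->
  exists l, f l = 1 /\ forall x, f x = 1 -> sqnorm ip l <= sqnorm ip x.
Proof.
case=> w fw.
pose S := [set sqnorm ip x | x in [set x | f x = 1]]%classic.
have S_ne0 : (S !=set0)%classic.
  by exists (sqnorm ip ((f w)^-1 *: w)), ((f w)^-1 *: w); rewrite //= flinZ mulVf.
have S_lb : has_lbound S by exists 0 => _ [x _ <-]; exact: sqnorm_ge0.
pose d := inf S.
have d_lb x : f x = 1 -> d <= sqnorm ip x by move=> fx; apply: (ge_inf S_lb); exists x.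
have d_ge0 : 0 <= d by apply: lb_le_inf S_ne0 _ => _ [x _ <-]; exact: sqnorm_ge0.
have xs_ex n : exists x, f x = 1 /\ sqnorm ip x < d + n.+1%:R^-1.
  have n_gt0 : 0 < n.+1%:R^-1 :> R by rewrite invr_gt0.
  have [_ [x fx <-] lt_x] := inf_adherent n_gt0 (conj S_ne0 S_lb).
  by exists x.
have [xs xsP] := choice _ xs_ex.
have [l xs_l] := minimizing_hcvg d_lb (fun n => (xsP n).1) (fun n => (xsP n).2).
exists l; split; first exact: hcvg_level (fun n => (xsP n).1) xs_l.
move=> x fx; apply: le_trans _ (d_lb _ fx).
by apply: (hcvg_sqnorm_le ipP _ xs_l) => // n; exact: (xsP n).2.
Qed.

Theorem riesz : exists z, forall x, f x = ip x z.
Proof.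
have [[w fw]|f_eq0] := pselect (exists w, f w != 0).
  have [l [fl l_min]] := exists_level_min (ex_intro _ w fw).
  exact: level_min_riesz fl l_min.
exists 0 => x; rewrite (ip0r ipP); apply: contrapT => fx.
by apply: f_eq0; exists x; apply/eqP.
Qed.

End Riesz.

Section Adjoint.
Variables (R : realType) (V : lmodType R[i]) (ip : V -> V -> R[i]).
Hypothesis ipP : is_inner_product ip.

Lemma ip_injr z1 z2 : (forall x, ip x z1 = ip x z2) -> z1 = z2.
Proof.
move=> ip_eq; apply/eqP; rewrite -subr_eq0; apply/eqP/(sqnorm_eq0 ipP).
by rewrite /sqnorm (ipBr ipP) ip_eq subrr.
Qed.

Lemma adjE T y z : (forall x, ip (T x) y = ip x z) -> adj ip T y = z.
Proof.
move=> Tyz; rewrite /adj; case: excluded_middle_informative => [ex|]; last first.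
  by case; exists z.
by case: constructive_indefinite_description => z' /= Tyz'; apply: ip_injr => x; rewrite -Tyz'.
Qed.

Lemma bounded_opD F G : bounded_op ip F -> bounded_op ip G -> bounded_op ip (opadd F G).
Proof.
case=> F_lin [KF F_bd] [G_lin [KG G_bd]]; split.
  by move=> a x y; rewrite /opadd F_lin G_lin scalerDr addrACA.
exists (KF + KG) => x; rewrite mulrDl.
by apply: le_trans (hnormD ipP _ _) _; apply: lerD.
Qed.

Lemma bounded_opZ a F : bounded_op ip F -> bounded_op ip (opscale a F).
Proof.
case=> F_lin [K F_bd]; split.
  by move=> b x y; rewrite /opscale F_lin scalerDr !scalerA mulrC.
exists (normc a * K) => x; rewrite /opscale (hnormZ ipP) -mulrA.
by apply: ler_wpM2l; [exact: normc_ge0 | exact: F_bd].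
Qed.

Hypothesis ip_complete : hcomplete ip.

Lemma adjP T : bounded_op ip T -> forall x y, ip (T x) y = ip x (adj ip T y).
Proof.
case=> T_lin [K T_bd] x y.
have Ty_lin a x1 x2 : ip (T (a *: x1 + x2)) y = a * ip (T x1) y + ip (T x2) y.
  by rewrite T_lin (ipDl ipP) (ipZl ipP).
have Ty_bd x1 : normc (ip (T x1) y) <= (K * hnorm ip y) * hnorm ip x1.
  apply: le_trans (normc_ip_le ipP _ _) _; rewrite [_ * hnorm ip x1]mulrAC.
  by apply: ler_wpM2r; [exact: hnorm_ge0 | exact: T_bd].
have [z Tyz] := riesz ipP ip_complete Ty_lin Ty_bd.
by rewrite (adjE Tyz) Tyz.
Qed.

Lemma adj_bounded T : bounded_op ip T -> bounded_op ip (adj ip T).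
Proof.
move=> T_bd; have T_adj := adjP T_bd; case: T_bd => _ [K T_bd]; split.
  by move=> a y1 y2; apply: adjE => x; rewrite !(ipDr ipP) !(ipZr ipP) !T_adj.
exists `|K| => y; set z := adj ip T y.
have zz_le : sqnorm ip z <= `|K| * hnorm ip z * hnorm ip y.
  rewrite /sqnorm -T_adj; apply: le_trans (Re_ip_le ipP _ _) _.
  apply: ler_wpM2r; first exact: hnorm_ge0.
  apply: le_trans (T_bd z) _.
  by apply: ler_wpM2r; [exact: hnorm_ge0 | exact: ler_norm].
have [z0|z_ne0] := eqVneq (hnorm ip z) 0.
  by rewrite z0 mulr_ge0 ?normr_ge0 ?hnorm_ge0.
have z_gt0 : 0 < hnorm ip z by rewrite lt_def z_ne0 hnorm_ge0.
by rewrite -(ler_pM2l z_gt0) -expr2 (hnorm_sqr ipP) mulrCA mulrA.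
Qed.

Lemma adjD F G y : bounded_op ip F -> bounded_op ip G ->
  adj ip (opadd F G) y = adj ip F y + adj ip G y.
Proof.
by move=> F_bd G_bd; apply: adjE => x; rewrite (ipDl ipP) (ipDr ipP) !adjP.
Qed.

Lemma adjZ a F y : bounded_op ip F -> adj ip (opscale a F) y = conjc a *: adj ip F y.
Proof.
by move=> F_bd; apply: adjE => x; rewrite (ipZl ipP) (ipZr ipP) conjcK adjP.
Qed.

Lemma bounded_ReOp F : bounded_op ip F -> bounded_op ip (ReOp ip F).
Proof.
move=> F_bd; rewrite (_ : ReOp ip F = opscale 2^-1 (opadd F (adj ip F))) //.
exact/bounded_opZ/bounded_opD/adj_bounded.
Qed.

Lemma ReOpD F G : bounded_op ip F -> bounded_op ip G ->
  ReOp ip (opadd F G) = opadd (ReOp ip F) (ReOp ip G).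
Proof.
by move=> F_bd G_bd; apply: funext => x; rewrite /ReOp /opadd adjD // addrACA scalerDr.
Qed.

Lemma ReOpZ_real (r : R) F : bounded_op ip F ->
  ReOp ip (opscale r%:C F) = opscale r%:C (ReOp ip F).
Proof.
move=> F_bd; apply: funext => x.
by rewrite /ReOp /opscale adjZ // conjc_real -scalerDr !scalerA mulrC.
Qed.

End Adjoint.

Section NumericalRadius.
Variables (R : realType) (V : lmodType R[i]) (ip : V -> V -> R[i]).
Variable N : (V -> V) -> R.

Lemma ReOp_le_wN t T : ((N (ReOp ip (opscale (expi t) T)))%:E <= wN ip N T)%E.
Proof. by apply: ereal_sup_ubound; exists t. Qed.

Variables B C : V -> V.

Lemma wN_le_wNe_l : (wN ip N B <= wNe ip N B C)%E.
Proof.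
apply: ge_ereal_sup => _ [t _ <-]; apply: ereal_sup_ubound.
exists 1, 0, t; split; first by rewrite normc1 normc0 expr1n expr0n /= addr0.
congr (N (ReOp _ (opscale _ _)))%:E; apply: funext => x.
by rewrite /opadd /opscale scale1r scale0r addr0.
Qed.

Lemma wN_le_wNe_r : (wN ip N C <= wNe ip N B C)%E.
Proof.
apply: ge_ereal_sup => _ [t _ <-]; apply: ereal_sup_ubound.
exists 0, 1, t; split; first by rewrite normc1 normc0 expr1n expr0n /= add0r.
congr (N (ReOp _ (opscale _ _)))%:E; apply: funext => x.
by rewrite /opadd /opscale scale1r scale0r add0r.
Qed.

Hypotheses (ipP : is_inner_product ip) (ip_complete : hcomplete ip).
Hypotheses (NP : is_op_norm ip N) (B_bd : bounded_op ip B) (C_bd : bounded_op ip C).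

Lemma N_ReOp_lincomb_le l1 l2 t : exists t1 t2,
  N (ReOp ip (opscale (expi t) (opadd (opscale l1 B) (opscale l2 C)))) <=
  normc l1 * N (ReOp ip (opscale (expi t1) B)) + normc l2 * N (ReOp ip (opscale (expi t2) C)).
Proof.
have [t1 e1] := expi_mul_polar t l1; have [t2 e2] := expi_mul_polar t l2.
exists t1, t2.
have -> : opscale (expi t) (opadd (opscale l1 B) (opscale l2 C)) =
    opadd (opscale (normc l1 : R)%:C (opscale (expi t1) B))
          (opscale (normc l2 : R)%:C (opscale (expi t2) C)).
  by apply: funext => x; rewrite /opadd /opscale scalerDr !scalerA e1 e2.
have B1_bd := bounded_opZ ipP (expi t1) B_bd.
have C2_bd := bounded_opZ ipP (expi t2) C_bd.
rewrite (ReOpD ipP ip_complete (bounded_opZ ipP _ B1_bd) (bounded_opZ ipP _ C2_bd)).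
rewrite !(ReOpZ_real ipP ip_complete) //.
have [_ _ NZ ND] := NP.
have ReB_bd := bounded_ReOp ipP ip_complete B1_bd.
have ReC_bd := bounded_ReOp ipP ip_complete C2_bd.
apply: le_trans (ND _ _ (bounded_opZ ipP _ ReB_bd) (bounded_opZ ipP _ ReC_bd)) _.
by rewrite (NZ _ _ ReB_bd) (NZ _ _ ReC_bd) !normc_real !ger0_norm ?normc_ge0.
Qed.

End NumericalRadius.

Unset Implicit Arguments. Set Strict Implicit.

Theorem theorem2p4 (R : realType) (V : lmodType R[i]) (ip : V -> V -> R[i])
  (hH : is_hilbert ip) (N : (V -> V) -> R) (hN : is_op_norm ip N)
  (B Cop : V -> V) (hB : bounded_op ip B) (hC : bounded_op ip Cop) :
  (maxe (wN ip N B) (wN ip N Cop) <= wNe ip N B Cop)%E /\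
  (wNe ip N B Cop <= esqrt (wN ip N B * wN ip N B + wN ip N Cop * wN ip N Cop))%E.
Proof.
case: hH => ipP ip_complete; split.
  by rewrite ge_max wN_le_wNe_l wN_le_wNe_r.
apply: ge_ereal_sup => _ [l1 [l2 [t [l_unit ->]]]].
have [t1 [t2 N_le]] := N_ReOp_lincomb_le ipP ip_complete hN hB hC l1 l2 t.
apply: le_trans (lee_unit_dot_esqrt (normc_ge0 l1) (normc_ge0 l2) l_unit
  (ReOp_le_wN ip N t1 B) (ReOp_le_wN ip N t2 Cop)).
by rewrite lee_fin.
Qed.
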